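(* Let $E$ be a finite-dimensional real vector space with dual space $E^{*}$. An extended-real-valued function $h$ on $E$ is generalized affine if and only if there exist finite sequences (possibly of length zero) of vectors $\eta_1,\dots,\eta_j\in E^{*}$ and scalars $\delta_1,\dots,\delta_j$ such that $\eta_1,\dots,\eta_j$ are linearly independent and $h$ has the following form. Define $H_0=E$ and, for $0<i\le j$, $$H_i=\{x\in H_{i-1}:\langle x,\eta_i\rangle=\delta_i\},\quad C_i^{+}=\{x\in H_{i-1}:\langle x,\eta_i\rangle>\delta_i\},\quad C_i^{-}=\{x\in H_{i-1}:\langle x,\eta_i\rangle<\delta_i\},$$ all of these sets (if any) being nonempty. Then $h(x)=+\infty$ whenever $x\in C_i^{+}$ for some $i$, $h(x)=-\infty$ whenever $x\in C_i^{-}$ for some $i$, and $h$ restricted to $H_j$ is either affine or constant, where $+\infty$ and $-\infty$ are allowed as constant values.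
   Context: $\langle\cdot,\cdot\rangle$ is the canonical bilinear pairing of $E$ and $E^{*}$. A generalized affine function is a function $E\to\mathbb{R}\cup\{\pm\infty\}$ that is both convex and concave in the extended-real-valued sense. When $j=0$, the statement says $h$ is affine on $E$ or constant on $E$. *)

From HB Require Import structures.
From mathcomp Require Import all_boot all_order all_algebra.
From mathcomp Require Import reals constructive_ereal.
Set Implicit Arguments. Unset Strict Implicit. Unset Printing Implicit Defensive.
Import Order.TTheory GRing.Theory Num.Theory.
Local Open Scope ring_scope.
Local Open Scope ereal_scope.

(* E : vectType R is a finite-dimensional real vector space; its dual E^* is
   'Hom(E, R^o), and the pairing <x, eta> is the application eta x. *)

(* Convexity of an extended-real-valued function = convexity of its epigraph
   {(x, t) in E * R | f x <= t}, written out. *)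
Definition ext_convex (R : realType) (E : vectType R) (f : E -> \bar R) : Prop :=
  forall (x y : E) (s t l : R), (0 <= l <= 1)%R ->
    f x <= s%:E -> f y <= t%:E ->
    f (l *: x + (1 - l) *: y)%R <= (l * s + (1 - l) * t)%:E.

(* Concavity = convexity of the hypograph {(x, t) | t <= f x}
   (equivalently, convexity of -f). *)
Definition ext_concave (R : realType) (E : vectType R) (f : E -> \bar R) : Prop :=
  forall (x y : E) (s t l : R), (0 <= l <= 1)%R ->
    s%:E <= f x -> t%:E <= f y ->
    (l * s + (1 - l) * t)%:E <= f (l *: x + (1 - l) *: y)%R.

Definition generalized_affine (R : realType) (E : vectType R) (f : E -> \bar R) : Prop :=
  ext_convex f /\ ext_concave f.

Definition Hset (R : realType) (E : vectType R) (j : nat)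
  (eta : 'I_j -> 'Hom(E, R^o)) (delta : 'I_j -> R) (i : nat) (x : E) : Prop :=
  forall k : 'I_j, (k < i)%N -> eta k x = delta k.

(* C_i^+ = { x in H_(i-1) | <x, eta_i> > delta_i } with 0-based index i. *)
Definition Cplus (R : realType) (E : vectType R) (j : nat)
  (eta : 'I_j -> 'Hom(E, R^o)) (delta : 'I_j -> R) (i : 'I_j) (x : E) : Prop :=
  Hset eta delta i x /\ (delta i < eta i x)%R.

Definition Cminus (R : realType) (E : vectType R) (j : nat)
  (eta : 'I_j -> 'Hom(E, R^o)) (delta : 'I_j -> R) (i : 'I_j) (x : E) : Prop :=
  Hset eta delta i x /\ (eta i x < delta i)%R.

From HB Require Import structures.
From mathcomp Require Import all_boot all_order all_algebra.
From mathcomp Require Import boolp classical_sets reals constructive_ereal.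
From mathcomp Require Import ring lra zify.
Import Order.TTheory GRing.Theory Num.Theory.
Set Implicit Arguments. Unset Strict Implicit. Unset Printing Implicit Defensive.
Local Open Scope ring_scope.

(* Write P = {h = +oo} and M = {h = -oo}.  Concavity of h says that a segment
   from a point of P to a point outside M lies in P except possibly at its far
   end; convexity says the same with P and M exchanged.  On an affine set S this
   is the relation [inf_pattern S P M].

   If P and M both meet S, there is a direction u along which every line of S
   passes from M to P: try u = p - m; if some parallel line does not cross, the
   lines lying entirely in P or in M form a pattern of the same kind, invariant
   under one more translation, and we recurse on the dimension of the space of
   invariant translations.  The crossing point on the line through y is an
   affine function of y, so a hyperplane {eta = delta} of S, with eta
   nonconstant on S, separates P from M.  If only one of P, M meets S, it fills
   S; if neither does, h is finite, hence affine, on S.  Iterating on the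
   hyperplane produces eta_1, ..., eta_j, which are independent because each is
   nonconstant on the common level set of the previous ones.

   Conversely, for a segment whose endpoints have h < +oo, either both endpoints
   lie in H_j, or at the first level they leave, the open segment lies in some
   C_i^-, where h = -oo.  This gives convexity; concavity follows by h -> -h. *)

Section Line.
Variable R : realType.
Implicit Types (p m : R -> Prop) (a b c l t : R).

Definition inf_pattern1 p m :=
  [/\ forall t, p t -> m t -> False,
      forall a b l, 0 < l < 1 -> p a -> ~ m b -> p (l * a + (1 - l) * b) &
      forall a b l, 0 < l < 1 -> m a -> ~ p b -> m (l * a + (1 - l) * b)].

Definition crosses p m :=
  exists T1 T2, (forall t, t <= T1 -> m t) /\ (forall t, T2 <= t -> p t).

Lemma inf_pattern1_sym p m : inf_pattern1 p m -> inf_pattern1 m p.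
Proof. by case=> pm Hp Hm; split=> // t /[swap]; apply: pm. Qed.

Lemma between_comb a b c : a < c < b \/ b < c < a ->
  exists2 l, 0 < l < 1 & c = l * a + (1 - l) * b.
Proof.
move=> abc; have ab : a - b != 0 by apply/eqP; case: abc => /andP[]; lra.
exists ((c - b) / (a - b)); last by field.
have lE : (c - b) / (a - b) * (a - b) = c - b by field.
by move: lE; set l := _ / _ => lE; case: abc => /andP[? ?]; apply/andP; split; nra.
Qed.

Lemma inf_pattern1_below p m t0 t1 t : inf_pattern1 p m ->
  m t0 -> p t1 -> t0 < t1 -> t < t0 -> m t.
Proof.
case=> pm Hp _ mt0 pt1 t01 tt0; apply: contrapT => nmt.
have [l l01 t0E] : exists2 l, 0 < l < 1 & t0 = l * t1 + (1 - l) * t.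
  by apply: between_comb; right; rewrite tt0.
by apply: (pm t0) mt0; rewrite t0E; apply: Hp.
Qed.

Lemma inf_pattern1_above p m t0 t1 t : inf_pattern1 p m ->
  m t0 -> p t1 -> t0 < t1 -> t1 < t -> p t.
Proof.
case=> pm _ Hm mt0 pt1 t01 t1t; apply: contrapT => npt.
have [l l01 t1E] : exists2 l, 0 < l < 1 & t1 = l * t0 + (1 - l) * t.
  by apply: between_comb; left; rewrite t01.
by apply: (pm t1 pt1); rewrite t1E; apply: Hm.
Qed.

Lemma crosses_of_lt p m t0 t1 : inf_pattern1 p m ->
  m t0 -> p t1 -> t0 < t1 -> crosses p m.
Proof.
move=> pat mt0 pt1 t01; exists t0, t1; split=> t.
  by rewrite le_eqVlt => /predU1P[-> //|]; apply: inf_pattern1_below pat mt0 pt1 t01.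
by rewrite le_eqVlt => /predU1P[<- //|]; apply: inf_pattern1_above pat mt0 pt1 t01.
Qed.

Lemma half_gt0_lt1 : 0 < (2^-1 : R) < 1.
Proof. by rewrite invr_gt0 ltr0n invf_lt1 ?ltr0n ?ltr1n. Qed.

Lemma inf_pattern1_reflect p m s t : inf_pattern1 p m ->
  ~ p s -> ~ m s -> m t -> p (s + (s - t)).
Proof.
case=> _ _ Hm nps nms mt; apply: contrapT => np; apply: nms.
have -> : s = 2^-1 * t + (1 - 2^-1) * (s + (s - t)) by field.
exact: Hm half_gt0_lt1 mt np.
Qed.

Lemma line_cases p m : inf_pattern1 p m ->
  [\/ forall t, p t, forall t, m t, crosses p m |
      crosses (fun t => ~ p t) (fun t => ~ m t)].
Proof.
move=> pat; have pat' := inf_pattern1_sym pat; have [pm _ _] := pat.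
have [[t1 pt1]|np] := pselect (exists t, p t);
  have [[t0 mt0]|nm] := pselect (exists t, m t).
- case: (ltgtP t0 t1) => [t01|t10|t01]; first exact/Or43/(crosses_of_lt pat mt0 pt1).
    have [T1 [T2 [Hp Hm]]] := crosses_of_lt pat' pt1 mt0 t10.
    by apply: Or44; exists T1, T2; split=> t /[dup] Ht ? Ht';
      [apply: (pm t) (Hp _ Ht) Ht'|apply: (pm t) Ht' (Hm _ Ht)].
  by case: (pm t1 pt1); rewrite -t01.
- apply: Or41 => t; apply: contrapT => npt.
  have nmt : ~ m t by move=> mt; apply: nm; exists t.
  by apply: nm; exists (t + (t - t1)); apply: inf_pattern1_reflect pat' nmt npt pt1.
- apply: Or42 => t; apply: contrapT => nmt.
  have npt : ~ p t by move=> pt; apply: np; exists t.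
  by apply: np; exists (t + (t - t0)); apply: inf_pattern1_reflect pat npt nmt mt0.
- by apply: Or44; exists 0, 0; split=> t _ H; [apply: nm|apply: np]; exists t.
Qed.

End Line.

Section Pattern.
Variables (R : realType) (E : vectType R).
Implicit Types (S P M : E -> Prop) (x y z u : E) (a b l t : R).

Definition affine_set S := forall x y z t, S x -> S y -> S z -> S (x + t *: (y - z)).

Definition direction S u := forall y t, S y -> S (y + t *: u).

Definition inf_pattern S P M :=
  [/\ affine_set S, forall x, S x -> P x -> M x -> False,
      forall x y l, S x -> S y -> 0 < l < 1 -> P x -> ~ M y -> P (l *: x + (1 - l) *: y) &
      forall x y l, S x -> S y -> 0 < l < 1 -> M x -> ~ P y -> M (l *: x + (1 - l) *: y)].

Definition whole_line P y u := forall t, P (y + t *: u).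

Definition crosses_along P M y u :=
  crosses (fun t => P (y + t *: u)) (fun t => M (y + t *: u)).

Lemma combE x y l : l *: x + (1 - l) *: y = y + l *: (x - y).
Proof. by rewrite scalerBl scale1r scalerBr addrCA. Qed.

Lemma comb_id y l : l *: y + (1 - l) *: y = y.
Proof. by rewrite combE subrr scaler0 addr0. Qed.

Lemma comb_line x y a b u l :
  l *: (x + a *: u) + (1 - l) *: (y + b *: u) =
  (l *: x + (1 - l) *: y) + (l * a + (1 - l) * b) *: u.
Proof. by rewrite !scalerDr !scalerA [(l * a + _) *: u]scalerDl addrACA. Qed.

Lemma comb_half_line x y a u :
  2^-1 *: (x + a *: u) + (1 - 2^-1) *: (y - a *: u) = 2^-1 *: x + (1 - 2^-1) *: y.
Proof.
rewrite -scaleNr comb_line; have -> : 2^-1 * a + (1 - 2^-1) * - a = 0 :> R by field.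
by rewrite scale0r addr0.
Qed.

Lemma affine_set_comb S x y l : affine_set S -> S x -> S y -> S (l *: x + (1 - l) *: y).
Proof. by move=> affS Sx Sy; rewrite combE; apply: affS. Qed.

Lemma inf_pattern_sym S P M : inf_pattern S P M -> inf_pattern S M P.
Proof. by case=> affS PM HP HM; split=> // x Sx /[swap]; apply: PM. Qed.

Lemma inf_pattern_line S P M y u : inf_pattern S P M -> S y -> direction S u ->
  inf_pattern1 (fun t => P (y + t *: u)) (fun t => M (y + t *: u)).
Proof.
case=> _ PM HP HM Sy Su; split=> [t|a b l l01 Pa nMb|a b l l01 Ma nPb].
- exact/PM/Su.
- by rewrite -(comb_id y l) -comb_line; apply: HP => //; apply: Su.
- by rewrite -(comb_id y l) -comb_line; apply: HM => //; apply: Su.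
Qed.

Lemma inf_pattern_reflect S P M s x : inf_pattern S P M ->
  S s -> ~ P s -> ~ M s -> S x -> M x -> P (s + (s - x)).
Proof.
case=> affS _ _ HM Ss nPs nMs Sx Mx; apply: contrapT => nP; apply: nMs.
rewrite -(comb_id s 2^-1) -(comb_half_line s s 1 (x - s)) scale1r [s + (x - s)]addrC subrK opprB.
apply: HM (half_gt0_lt1 R) Mx nP => //.
by rewrite -[s - x]scale1r; apply: affS.
Qed.

Lemma unit_interval_cases l : 0 <= l <= 1 -> [\/ l = 0, l = 1 | 0 < l < 1].
Proof.
case/andP=> l0 l1; have [->|nl0] := eqVneq l 0; first exact: Or31.
have [->|nl1] := eqVneq l 1; first exact: Or32.
by apply: Or33; rewrite !lt_def nl0 l0 l1 eq_sym nl1.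
Qed.

Lemma inf_pattern_convex S P M x y l : inf_pattern S P M ->
  S x -> S y -> 0 <= l <= 1 -> P x -> P y -> P (l *: x + (1 - l) *: y).
Proof.
case=> _ PM HP _ Sx Sy /unit_interval_cases[->|->|l01] Px Py.
- by rewrite scale0r add0r subr0 scale1r.
- by rewrite subrr scale0r addr0 scale1r.
- by apply: HP => // /(PM _ Sy); apply.
Qed.

Lemma inf_pattern_midpoint S P M y1 y2 u a b : inf_pattern S P M -> direction S u ->
  S y1 -> S y2 -> P (y1 + a *: u) -> ~ M (y2 - a *: u) ->
  M (y1 + b *: u) -> ~ P (y2 - b *: u) -> False.
Proof.
case=> affS PM HP HM Su S1 S2 Pa nMa Mb nPb.
have S2' t : S (y2 - t *: u) by rewrite -scaleNr; apply: Su.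
apply: (PM (2^-1 *: y1 + (1 - 2^-1) *: y2)); first exact: affine_set_comb.
- by rewrite -(comb_half_line _ _ a u); apply: HP (half_gt0_lt1 R) Pa nMa => //; apply: Su.
- by rewrite -(comb_half_line _ _ b u); apply: HM (half_gt0_lt1 R) Mb nPb => //; apply: Su.
Qed.

Lemma parallel_lines S P M u y0 : inf_pattern S P M -> direction S u ->
  S y0 -> crosses_along P M y0 u ->
  forall y, S y -> [\/ whole_line P y u, whole_line M y u | crosses_along P M y u].
Proof.
move=> pat Su Sy0 [T1 [T2 [HM0 HP0]]] y Sy.
case: (line_cases (inf_pattern_line pat Sy Su)) => [H|H|H|[U1 [U2 [HnM HnP]]]];
  [exact: Or31|exact: Or32|exact: Or33|exfalso].
apply: (inf_pattern_midpoint (a := Num.max T2 (- U1)) (b := Num.min T1 (- U2)) pat Su Sy0 Sy).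
- by apply: HP0; rewrite le_max lexx.
- by rewrite -scaleNr; apply: HnM; rewrite lerNl le_max lexx orbT.
- by apply: HM0; rewrite ge_min lexx.
- by rewrite -scaleNr; apply: HnP; rewrite lerNr ge_min lexx orbT.
Qed.

End Pattern.

Section CrossingDirection.
Variables (R : realType) (E : vectType R) (S : E -> Prop).
Implicit Types (P M : E -> Prop) (x y u w : E) (W : {vspace E}).

Definition translation_invariant P W :=
  forall x w, S x -> w \in W -> (P (x + w) <-> P x).

Definition crossing_direction P M u :=
  direction S u /\ forall y, S y -> crosses_along P M y u.

Definition nontrivial_pattern P M W :=
  [/\ inf_pattern S P M, translation_invariant P W, translation_invariant M W,
      exists p, S p /\ P p & exists m, S m /\ M m].

Lemma whole_line_invariant P W u : direction S u -> translation_invariant P W ->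
  translation_invariant (whole_line P ^~ u) (W + <[u]>).
Proof.
move=> Su invP x w Sx /memv_addP[w0 w0W [_ /vlineP[s ->] ->]].
have shift t : x + (w0 + s *: u) + t *: u = (x + (s + t) *: u) + w0.
  by rewrite scalerDl !addrA (addrAC x w0) (addrAC _ w0).
split=> H t.
- have := H (t - s); rewrite shift addrCA subrr addr0.
  by move/(invP _ _ (Su _ _ Sx) w0W).
- by rewrite shift; apply/(invP _ _ (Su _ _ Sx) w0W).
Qed.

Lemma whole_line_pattern P M u m : inf_pattern S P M -> direction S u ->
  S m -> crosses_along P M m u -> inf_pattern S (whole_line P ^~ u) (whole_line M ^~ u).
Proof.
move=> pat Su Sm cm; have [affS PM HP HM] := pat.
have lines := parallel_lines pat Su Sm cm.
have shift x y l a T : 0 < l -> l *: x + (1 - l) *: y + a *: u =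
    l *: (x + ((a - (1 - l) * T) / l) *: u) + (1 - l) *: (y + T *: u).
  by move=> l0; rewrite comb_line; congr (_ + _ *: _); field; rewrite gt_eqF.
split=> // [x Sx /(_ 0) + /(_ 0)|x y l Sx Sy l01 Px nMy t|x y l Sx Sy l01 Mx nPy t].
- by rewrite scale0r addr0; apply: PM.
- have [T HT] : exists T, forall t, T <= t -> P (y + t *: u).
    case: (lines y Sy) => [Py|//|[_ [T [_ HT]]]]; last by exists T.
    by exists 0 => ? _; apply: Py.
  have [l0 _] := andP l01; rewrite (shift _ _ _ _ T) //.
  by apply: HP => //; [exact: Su|exact: Su|move/(PM _ (Su _ _ Sy)); apply; apply: HT].
- have [T HT] : exists T, forall t, t <= T -> M (y + t *: u).
    case: (lines y Sy) => [//|My|[T [_ [HT _]]]]; last by exists T.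
    by exists 0 => ? _; apply: My.
  have [l0 _] := andP l01; rewrite (shift _ _ _ _ T) //.
  by apply: HM => //; [exact: Su|exact: Su|move/(PM _ (Su _ _ Sy)); apply; apply: HT].
Qed.

Lemma crossing_or_invariance_step P M W : nontrivial_pattern P M W ->
  (exists u, crossing_direction P M u) \/
  exists2 u, u \notin W &
    nontrivial_pattern (whole_line P ^~ u) (whole_line M ^~ u) (W + <[u]>).
Proof.
case=> pat invP invM [p [Sp Pp]] [m [Sm Mm]]; have [affS PM _ _] := pat.
pose u := p - m; have Su : direction S u by move=> y t Sy; apply: affS.
have mu : m + 1 *: u = p by rewrite scale1r addrC subrK.
have cm : crosses_along P M m u.
  apply: (crosses_of_lt (inf_pattern_line pat Sm Su) (t0 := 0) (t1 := 1)) => //.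
  - by rewrite scale0r addr0.
  - by rewrite mu.
have [cross|/existsNP[y0 /not_implyP[Sy0 ncross]]] :=
  pselect (forall y, S y -> crosses_along P M y u); first by left; exists u.
right; exists u.
  by apply/negP => uW; apply: (PM m Sm _ Mm); apply/(invP _ _ Sm uW); rewrite -[u]scale1r mu.
have pat' := whole_line_pattern pat Su Sm cm.
have nPm : ~ whole_line P m u by move/(_ 0); rewrite scale0r addr0 => /PM; apply.
have nMm : ~ whole_line M m u by move/(_ 1); rewrite mu; apply: PM Sp Pp.
have Sm' : S (m + (m - y0)) by rewrite -[m - y0]scale1r; apply: affS.
split=> //; try exact: whole_line_invariant.
- case: (parallel_lines pat Su Sm cm Sy0) => [Py0|My0|//].
    by exists y0.
  by exists (m + (m - y0)); split; last exact: inf_pattern_reflect pat' Sm nPm nMm Sy0 My0.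
- case: (parallel_lines pat Su Sm cm Sy0) => [Py0|My0|//].
    exists (m + (m - y0)); split=> //.
    exact: inf_pattern_reflect (inf_pattern_sym pat') Sm nMm nPm Sy0 Py0.
  by exists y0.
Qed.

Lemma dimv_add_line_gt W u : u \notin W -> (\dim W < \dim (W + <[u]>))%N.
Proof.
move=> uW; rewrite (ltn_leqif (dimv_leqif_sup (addvSl W <[u]>))).
by rewrite subv_add subvv -memvE.
Qed.

Lemma nontrivial_pattern_crossing n P M W : (\dim {:E} - \dim W <= n)%N ->
  nontrivial_pattern P M W -> exists u, crossing_direction P M u.
Proof.
elim: n P M W => [|n IH] P M W codimW /crossing_or_invariance_step[//|[u uW pat']].
all: have dimWu := dimv_add_line_gt uW; have dimE := dimvS (subvf (W + <[u]>)).
  by exfalso; lia.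
have /IH /(_ pat') [v [Sv cross]] : (\dim {:E} - \dim (W + <[u]>) <= n)%N by lia.
exists v; split=> // y Sy; have [T1 [T2 [below above]]] := cross y Sy.
by exists T1, T2; split=> t /[dup] Ht; [move/below/(_ 0)|move/above/(_ 0)];
  rewrite scale0r addr0.
Qed.

Lemma exists_crossing_direction P M : inf_pattern S P M ->
  (exists p, S p /\ P p) -> (exists m, S m /\ M m) -> exists u, crossing_direction P M u.
Proof.
move=> pat exP exM; apply: (@nontrivial_pattern_crossing (\dim {:E}) _ _ 0%VS).
  exact: leq_subr.
have inv0 Q : translation_invariant Q 0 by move=> x w _; rewrite memv0 => /eqP ->; rewrite addr0.
by split.
Qed.

End CrossingDirection.

Lemma exists_lfun (K : fieldType) (U V : vectType K) (phi : U -> V) :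
  linear phi -> exists g : 'Hom(U, V), g =1 phi.
Proof.
move=> lin; pose L : {linear U -> V} := HB.pack phi (GRing.isLinear.Build _ _ _ _ phi lin).
by exists (linfun L) => x; rewrite lfunE.
Qed.

Section AffineFunctions.
Variables (R : realType) (E : vectType R).
Implicit Types (S : E -> Prop) (x y d : E) (l : R) (D : {vspace E}).

Definition nonconstant_on S (g : 'Hom(E, R^o)) := exists x y, [/\ S x, S y & g x != g y].

Lemma lfun_comb (g : 'Hom(E, R^o)) x y l :
  g (l *: x + (1 - l) *: y) = l * g x + (1 - l) * g y.
Proof. by rewrite linearD !linearZ. Qed.

Lemma affine_set_coset S o D : (forall x, S x <-> x - o \in D) -> affine_set S.
Proof.
move=> SD x y z t /SD xD /SD yD /SD zD; apply/SD.
have -> : y - z = (y - o) - (z - o) by rewrite opprB addrA subrK.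
by rewrite addrAC memvD // memvZ // memvB.
Qed.

Lemma lfun_line (g : 'Hom(E, R^o)) x y l : g (x + l *: y) = g x + l * g y.
Proof. by rewrite linearD linearZ. Qed.

Lemma nonconstant_on_surj S g r : affine_set S -> nonconstant_on S g -> exists x, S x /\ g x = r.
Proof.
move=> affS [x [y [Sx Sy gxy]]].
exists (x + ((r - g x) / (g y - g x)) *: (y - x)); split; first exact: affS.
by rewrite lfun_line linearB /=; field; rewrite subr_eq0 eq_sym.
Qed.

Lemma half_comb x y : 2^-1 *: x + (1 - 2^-1) *: y = 2^-1 *: (x + y) :> E.
Proof.
have -> : (1 - 2^-1 : R) = 2^-1 by field.
by rewrite scalerDr.
Qed.

Lemma linear_on_of_comb D (psi : E -> R) : psi 0 = 0 ->
  (forall x y l, x \in D -> y \in D -> 0 <= l <= 1 ->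
     psi (l *: x + (1 - l) *: y) = l * psi x + (1 - l) * psi y) ->
  exists g : 'Hom(E, R^o), {in D, g =1 psi}.
Proof.
move=> psi0 comb; have half01 : 0 <= (2^-1 : R) <= 1.
  by have /andP[? ?] := half_gt0_lt1 R; rewrite !ltW.
have scale01 l d : d \in D -> 0 <= l <= 1 -> psi (l *: d) = l * psi d.
  move=> dD l01; have := comb d 0 l dD (mem0v D) l01.
  by rewrite scaler0 addr0 psi0 mulr0 addr0.
have scaleN d : d \in D -> psi (- d) = - psi d.
  move=> dD; have NdD : - d \in D by rewrite memvN.
  have := comb d (- d) _ dD NdD half01.
  rewrite half_comb subrr scaler0 psi0; lra.
have scale_ge0 l d : d \in D -> 0 <= l -> psi (l *: d) = l * psi d.
  move=> dD l0; have [l1|l1] := leP l 1; first by apply: scale01; rewrite ?l0.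
  have l01 : 0 <= l^-1 <= 1 by rewrite invr_ge0 l0 invf_le1 ?ltW //; lra.
  have := scale01 _ _ (memvZ l dD) l01; rewrite scalerA mulVf ?scale1r => [->|]; last lra.
  by rewrite mulrA divff ?mul1r //; lra.
have scale l d : d \in D -> psi (l *: d) = l * psi d.
  move=> dD; have [l0|l0] := leP 0 l; first exact: scale_ge0.
  by rewrite -[l]opprK scaleNr scaleN ?memvZ // scale_ge0 //; [ring|lra].
have add d1 d2 : d1 \in D -> d2 \in D -> psi (d1 + d2) = psi d1 + psi d2.
  move=> d1D d2D; have := comb d1 d2 _ d1D d2D half01.
  rewrite half_comb scale ?memvD //; lra.
have [g gE] : exists g : 'Hom(E, R^o), g =1 psi \o projv D.
  by apply: exists_lfun => a x y /=; rewrite linearP /= add ?memvZ ?memv_proj // scale ?memv_proj.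
by exists g => x xD; rewrite gE /= projv_id.
Qed.

Lemma affine_on_coset S o D (f : E -> R) : (forall x, S x <-> x - o \in D) ->
  (forall x y l, S x -> S y -> 0 <= l <= 1 ->
     f (l *: x + (1 - l) *: y) = l * f x + (1 - l) * f y) ->
  exists (g : 'Hom(E, R^o)) (c : R), forall x, S x -> f x = g x + c.
Proof.
move=> SD comb; pose psi d := f (o + d) - f o.
have Sod d : d \in D -> S (o + d) by move=> dD; apply/SD; rewrite addrC addKr.
have [|x y l xD yD l01|g gE] := @linear_on_of_comb D psi.
- by rewrite /psi addr0 subrr.
- rewrite /psi -{1}(comb_id o l) addrACA -!scalerDr comb //; [ring|exact: Sod..].
exists g, (f o - g o) => x /SD xoD; have := gE _ xoD.
by rewrite /psi linearB /= [o + _]addrC subrK; lra.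
Qed.

End AffineFunctions.

Section Threshold.
Variables (R : realType) (E : vectType R) (S P M : E -> Prop) (u : E).
Hypotheses (pat : inf_pattern S P M) (cross : crossing_direction S P M u).
Implicit Types (x y : E) (a l s t : R).

Definition threshold y := sup [set t | M (y + t *: u)].

Let Su : direction S u := cross.1.

Let PM y t : S y -> P (y + t *: u) -> M (y + t *: u) -> False.
Proof. by have [_ PM _ _] := pat; move=> Sy; apply: PM; apply: Su. Qed.

Lemma threshold_has_sup y : S y -> has_sup [set t | M (y + t *: u)].
Proof.
move=> Sy; have [T1 [T2 [below above]]] := cross.2 y Sy.
split; first by exists T1; apply: below.
exists T2 => t Mt; rewrite leNgt; apply/negP => /ltW /above /PM; exact.
Qed.

Lemma threshold_ub y t : S y -> M (y + t *: u) -> t <= threshold y.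
Proof. by move=> Sy; apply: sup_upper_bound; apply: threshold_has_sup. Qed.

Lemma lt_threshold y t : S y -> t < threshold y -> M (y + t *: u).
Proof.
move=> Sy tth; have [_ [T2 [_ above]]] := cross.2 y Sy.
have eps0 : 0 < threshold y - t by rewrite subr_gt0.
have [e Me] := sup_adherent eps0 (threshold_has_sup Sy).
rewrite opprB addrCA subrr addr0 => te.
have eT2 : e < T2 by rewrite ltNge; apply/negP => /above /PM; apply.
exact: inf_pattern1_below (inf_pattern_line pat Sy Su) Me (above _ (lexx T2)) eT2 te.
Qed.

Lemma gt_threshold y t : S y -> threshold y < t -> P (y + t *: u).
Proof.
move=> Sy tht; have [T1 [_ [below _]]] := cross.2 y Sy.
have [_ _ HM] := inf_pattern_line pat Sy Su.
apply: contrapT => nPt.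
have T1th : T1 <= threshold y by apply: threshold_ub Sy (below _ (lexx T1)).
have [l l01 cE] : exists2 l, 0 < l < 1 & (threshold y + t) / 2 = l * T1 + (1 - l) * t.
  by apply: between_comb; left; apply/andP; split; lra.
have Mc : M (y + ((threshold y + t) / 2) *: u).
  by rewrite cE; apply: HM l01 (below _ (lexx T1)) nPt.
by have := threshold_ub Sy Mc; lra.
Qed.

Lemma threshold_unique y a : S y ->
  (forall t, t < a -> M (y + t *: u)) -> (forall t, a < t -> P (y + t *: u)) ->
  threshold y = a.
Proof.
move=> Sy below above; apply/eqP; rewrite eq_le !leNgt; apply/andP; split; apply/negP => lt.
- by apply: (PM (t := (a + threshold y) / 2) Sy); [apply: above|apply: lt_threshold Sy _]; lra.
- by apply: (PM (t := (a + threshold y) / 2) Sy); [apply: gt_threshold Sy _|apply: below]; lra.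
Qed.

Lemma threshold_shift y s : S y -> threshold (y + s *: u) = threshold y - s.
Proof.
move=> Sy; apply: threshold_unique; first exact: Su.
- by move=> t lt; rewrite -addrA -scalerDl; apply: lt_threshold => //; lra.
- by move=> t lt; rewrite -addrA -scalerDl; apply: gt_threshold => //; lra.
Qed.

Lemma threshold_comb x y l : S x -> S y -> 0 <= l <= 1 ->
  threshold (l *: x + (1 - l) *: y) = l * threshold x + (1 - l) * threshold y.
Proof.
have [affS _ _ _] := pat.
move=> Sx Sy l01; apply: threshold_unique; first exact: affine_set_comb.
- move=> t lt; pose e := l * threshold x + (1 - l) * threshold y - t.
  have -> : l *: x + (1 - l) *: y + t *: u =
      l *: (x + (threshold x - e) *: u) + (1 - l) *: (y + (threshold y - e) *: u).
    by rewrite comb_line /e; congr (_ + _ *: _); ring.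
  apply: (inf_pattern_convex (inf_pattern_sym pat) _ _ l01); try exact: Su;
    by apply: lt_threshold => //; rewrite /e; lra.
- move=> t lt; pose e := t - (l * threshold x + (1 - l) * threshold y).
  have -> : l *: x + (1 - l) *: y + t *: u =
      l *: (x + (threshold x + e) *: u) + (1 - l) *: (y + (threshold y + e) *: u).
    by rewrite comb_line /e; congr (_ + _ *: _); ring.
  apply: (inf_pattern_convex pat _ _ l01); try exact: Su;
    by apply: gt_threshold => //; rewrite /e; lra.
Qed.

Lemma inf_pattern_separation o (D : {vspace E}) : (forall x, S x <-> x - o \in D) ->
  exists (g : 'Hom(E, R^o)) (c : R), [/\ nonconstant_on S g,
    forall x, S x -> c < g x -> P x & forall x, S x -> g x < c -> M x].
Proof.
move=> SD; have So : S o by apply/SD; rewrite subrr mem0v.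
have comb x y l : S x -> S y -> 0 <= l <= 1 -> - threshold (l *: x + (1 - l) *: y) =
    l * - threshold x + (1 - l) * - threshold y.
  by move=> Sx Sy l01; rewrite threshold_comb //; ring.
have [g [c gE]] := affine_on_coset SD comb.
exists g, (- c); split.
- exists (o + 1 *: u), o; split; [exact: Su|exact: So|].
  have := gE _ So; have := gE _ (Su 1 So); rewrite threshold_shift // => ? ?.
  by apply/eqP; lra.
- move=> x Sx cg; have := gt_threshold (t := 0) Sx; rewrite scale0r addr0; apply.
  by have := gE x Sx; lra.
- move=> x Sx gc; have := lt_threshold (t := 0) Sx; rewrite scale0r addr0; apply.
  by have := gE x Sx; lra.
Qed.

End Threshold.

Section ExtendedConvexity.
Variables (R : realType) (E : vectType R).
Implicit Types (h : E -> \bar R) (x y : E) (l : R).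
Local Open Scope ereal_scope.

Lemma ext_convex_opp h : ext_convex (fun x => - h x) <-> ext_concave h.
Proof.
have combN l s t : (l * - s + (1 - l) * - t = - (l * s + (1 - l) * t))%R by ring.
split=> H x y s t l l01 hx hy.
- by rewrite -leeN2 -EFinN -combN; apply: H; rewrite // EFinN leeN2.
- by rewrite leeNl -EFinN -combN; apply: H; rewrite // EFinN leeNl.
Qed.

Lemma generalized_affine_opp h : generalized_affine h -> generalized_affine (fun x => - h x).
Proof.
case=> cvx ccv; split; first exact/ext_convex_opp.
by apply/ext_convex_opp; rewrite (_ : (fun x => - - h x) = h) // funeqE => x; rewrite oppeK.
Qed.

Lemma ext_concave_absorb h x y l : ext_concave h -> (0 < l < 1)%R ->
  h x = +oo -> h y != -oo -> h (l *: x + (1 - l) *: y)%R = +oo.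
Proof.
move=> ccv /andP[l0 l1] hx hy; have [t0 ht0] : exists t0 : R, t0%:E <= h y.
  by case: (h y) hy => [r _|_|//]; [exists r|exists 0%R; rewrite leey].
have l01 : (0 <= l <= 1)%R by rewrite !ltW.
apply: eq_infty => r; have := ccv x y ((r - (1 - l) * t0) / l)%R t0 l l01.
rewrite hx leey => /(_ isT ht0).
have -> // : (l * ((r - (1 - l) * t0) / l) + (1 - l) * t0 = r)%R.
by field; rewrite gt_eqF.
Qed.

Lemma generalized_affine_pattern h S : generalized_affine h -> affine_set S ->
  inf_pattern S (fun x => h x = +oo) (fun x => h x = -oo).
Proof.
move=> ga affS; have [_ ccv] := ga; have [_ ccvN] := generalized_affine_opp ga.
split=> // [x _ -> //|x y l _ _ l01 Px /eqP nMy|x y l _ _ l01 Mx nPy].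
  exact: ext_concave_absorb ccv l01 Px nMy.
apply/eqP; rewrite -eqe_opp; apply/eqP.
apply: ext_concave_absorb ccvN l01 _ _; first by rewrite Mx.
by rewrite eqe_oppLR; apply/eqP.
Qed.

End ExtendedConvexity.

Section Levels.
Variables (R : realType) (E : vectType R).
Implicit Types (f : nat -> 'Hom(E, R^o)) (d : nat -> R) (x : E).

Definition level f d i x := forall k, (k < i)%N -> f k x = d k.

Lemma level_affine f d i : affine_set (level f d i).
Proof.
move=> x y z t lx ly lz k ki.
by rewrite lfun_line linearB /= lx // ly // lz // subrr mulr0 addr0.
Qed.

Lemma level_le f d i j x : (i <= j)%N -> level f d j x -> level f d i x.
Proof. by move=> ij lj k ki; apply: lj; apply: leq_trans ki ij. Qed.

Lemma levelS f d i x : level f d i.+1 x <-> level f d i x /\ f i x = d i.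
Proof.
split=> [lx|[lx ex] k]; first by split=> [k ki|]; apply: lx; rewrite ltnS // ltnW.
by rewrite ltnS leq_eqVlt => /predU1P[->|]; last exact: lx.
Qed.

Lemma level_coset f d i o : level f d i o ->
  forall x, level f d i x <-> x - o \in (\bigcap_(k < i) lker (f k))%VS.
Proof.
move=> lo x; rewrite memvE; split=> [lx|/subv_bigcapP lx k ki].
  apply/subv_bigcapP => k _; rewrite -memvE memv_ker linearB /=.
  by rewrite lx // lo // subrr.
by have := lx (Ordinal ki) isT; rewrite -memvE memv_ker linearB /= subr_eq0 lo // => /eqP.
Qed.

End Levels.

Section Split.
Variables (R : realType) (E : vectType R) (h : E -> \bar R).
Hypothesis ga : generalized_affine h.
Implicit Types (S : E -> Prop) (x y : E) (D : {vspace E}).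
Local Open Scope ereal_scope.

Definition affine_or_constant S :=
  (exists (g : 'Hom(E, R^o)) (c : R), forall x, S x -> h x = (g x + c)%:E) \/
  (exists c : \bar R, forall x, S x -> h x = c).

Lemma generalized_affine_finite S o D : (forall x, S x <-> (x - o)%R \in D) ->
  (forall x, S x -> h x \is a fin_num) ->
  exists (g : 'Hom(E, R^o)) (c : R), forall x, S x -> h x = (g x + c)%:E.
Proof.
have [cvx ccv] := ga; move=> SD fin.
have hE x : S x -> h x = (fine (h x))%:E by move=> Sx; rewrite fineK ?fin.
have comb x y l : S x -> S y -> (0 <= l <= 1)%R ->
    fine (h (l *: x + (1 - l) *: y)%R) = (l * fine (h x) + (1 - l) * fine (h y))%R.
  move=> Sx Sy l01; have Sz := affine_set_comb l (affine_set_coset SD) Sx Sy.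
  apply/eqP; rewrite eq_le -!lee_fin -hE //.
  by apply/andP; split; [apply: cvx|apply: ccv] => //; rewrite -hE.
have [g [c gE]] := affine_on_coset SD comb.
by exists g, c => x Sx; rewrite hE // gE.
Qed.

Lemma generalized_affine_split S o D : (forall x, S x <-> (x - o)%R \in D) ->
  affine_or_constant S \/
  exists (eta : 'Hom(E, R^o)) (del : R), [/\ nonconstant_on S eta,
    forall x, S x -> (del < eta x)%R -> h x = +oo &
    forall x, S x -> (eta x < del)%R -> h x = -oo].
Proof.
move=> SD; have affS := affine_set_coset SD.
have pat := generalized_affine_pattern ga affS.
have Sreflect x y : S x -> S y -> S (x + (x - y))%R.
  by move=> Sx Sy; rewrite -[(x - y)%R]scale1r; apply: affS.
have [[p [Sp Pp]]|noP] := pselect (exists p, S p /\ h p = +oo);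
  have [[m [Sm Mm]]|noM] := pselect (exists m, S m /\ h m = -oo).
- right; have [u cross] := exists_crossing_direction pat
    (ex_intro _ p (conj Sp Pp)) (ex_intro _ m (conj Sm Mm)).
  exact (inf_pattern_separation pat cross SD).
- left; right; exists +oo => x Sx; apply: contrapT => nPx.
  have nMx : h x <> -oo by move=> Mx; apply: noM; exists x.
  apply: noM; exists (x + (x - p))%R; split; first exact: Sreflect.
  exact: inf_pattern_reflect (inf_pattern_sym pat) Sx nMx nPx Sp Pp.
- left; right; exists -oo => x Sx; apply: contrapT => nMx.
  have nPx : h x <> +oo by move=> Px; apply: noP; exists x.
  apply: noP; exists (x + (x - m))%R; split; first exact: Sreflect.
  exact: inf_pattern_reflect pat Sx nPx nMx Sm Mm.
- left; left; apply: generalized_affine_finite SD _ => x Sx.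
  by rewrite fin_numE; apply/andP; split; apply/eqP => hx; [apply: noM|apply: noP]; exists x.
Qed.

End Split.

Definition extend_at (T : Type) (s : nat -> T) (k : nat) (a : T) : nat -> T :=
  fun i => if (i < k)%N then s i else a.

Section Stratification.
Variables (R : realType) (E : vectType R).
Implicit Types (h : E -> \bar R) (f : nat -> 'Hom(E, R^o)) (d : nat -> R) (x : E).
Local Open Scope ereal_scope.

Definition infinite_on_halfspaces h k f d :=
  (forall i x, (i < k)%N -> level f d i x -> (d i < f i x)%R -> h x = +oo) /\
  (forall i x, (i < k)%N -> level f d i x -> (f i x < d i)%R -> h x = -oo).

Definition stratified h k f d :=
  [/\ exists x, level f d k x,
      forall i, (i < k)%N -> nonconstant_on (level f d i) (f i) &
      infinite_on_halfspaces h k f d].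

Lemma level_extend_at f d k eta del i : (i <= k)%N ->
  level (extend_at f k eta) (extend_at d k del) i = level f d i.
Proof.
move=> ik; apply/funext => x; apply/propext.
by split=> lx j ji; have := lx j ji; rewrite /extend_at (leq_trans ji ik).
Qed.

Lemma level_extend_at_succ f d k eta del x :
  level (extend_at f k eta) (extend_at d k del) k.+1 x <-> level f d k x /\ eta x = del.
Proof.
rewrite -(level_extend_at f d eta del (leqnn k)).
have [fk dk] : extend_at f k eta k = eta /\ extend_at d k del k = del.
  by rewrite /extend_at ltnn.
by split=> [/levelS|[lx ex]]; rewrite ?fk ?dk //; apply/levelS; rewrite fk dk.
Qed.

Lemma stratified_extend h k f d eta del : stratified h k f d ->
  nonconstant_on (level f d k) eta ->
  (forall x, level f d k x -> (del < eta x)%R -> h x = +oo) ->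
  (forall x, level f d k x -> (eta x < del)%R -> h x = -oo) ->
  stratified h k.+1 (extend_at f k eta) (extend_at d k del).
Proof.
move=> [_ ncst [hP hM]] ncst_eta hPk hMk.
have lvl i : (i < k.+1)%N -> level (extend_at f k eta) (extend_at d k del) i = level f d i.
  by move=> ik; apply: level_extend_at; rewrite -ltnS.
have atE i : (i < k)%N -> extend_at f k eta i = f i /\ extend_at d k del i = d i.
  by rewrite /extend_at => ->.
have atk : extend_at f k eta k = eta /\ extend_at d k del k = del.
  by rewrite /extend_at ltnn.
split; last split.
- have [x [lx ex]] := nonconstant_on_surj del (@level_affine _ _ f d k) ncst_eta.
  by exists x; apply/level_extend_at_succ.
- move=> i ik; rewrite lvl //; move: ik; rewrite ltnS leq_eqVlt => /predU1P[->|ik].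
    by case: atk => -> _.
  by case: (atE _ ik) => -> _; apply: ncst.
- move=> i x ik; rewrite lvl //; move: ik; rewrite ltnS leq_eqVlt => /predU1P[->|ik].
    by case: atk => -> ->; apply: hPk.
  by case: (atE _ ik) => -> ->; apply: hP.
- move=> i x ik; rewrite lvl //; move: ik; rewrite ltnS leq_eqVlt => /predU1P[->|ik].
    by case: atk => -> ->; apply: hMk.
  by case: (atE _ ik) => -> ->; apply: hM.
Qed.

Lemma free_of_nonconstant f d k :
  (forall i, (i < k)%N -> nonconstant_on (level f d i) (f i)) ->
  free [seq f i | i <- iota 0 k].
Proof.
elim: k => [|k IH] ncst; first exact: nil_free.
set s := [seq f i | i <- iota 0 k].
have permE : perm_eq (rcons s (f k)) (f k :: s) by rewrite perm_rcons.
rewrite -addn1 iotaD map_cat cats1 (perm_free permE) free_cons.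
rewrite IH ?andbT => [|i ik]; last by apply: ncst; apply: ltnW.
have [x [y [lx ly fxy]]] := ncst k (ltnSn k).
have [L LE] : exists L : 'Hom('Hom(E, R^o), R^o), L =1 fun g => g (y - x)%R.
  by apply: exists_lfun => a g1 g2; rewrite add_lfunE scale_lfunE.
have sub : (<<[seq f i | i <- iota 0 k]>> <= lker L)%VS.
  apply/span_subvP => g /mapP[i]; rewrite mem_iota add0n => /andP[_ ik] ->.
  by rewrite memv_ker LE linearB /= lx // ly // subrr.
by apply: contraNN fxy => /(subvP sub); rewrite memv_ker LE linearB /= subr_eq0 eq_sym.
Qed.

Lemma exists_stratification_from h n k f d : generalized_affine h -> stratified h k f d ->
  (\dim (fullv : {vspace 'Hom(E, R^o)}) - k <= n)%N ->
  exists k' f' d', stratified h k' f' d' /\ affine_or_constant h (level f' d' k').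
Proof.
move=> ga; elim: n k f d => [|n IH] k f d st codim.
all: have [[o lo] _ _] := st.
all: have [|[eta [del [ncst hP hM]]]] := generalized_affine_split ga (level_coset lo);
  first by exists k, f, d.
all: have st' := stratified_extend st ncst hP hM; have [_ ncst' _] := st'.
all: have := dimvS (subvf <<[seq extend_at f k eta i | i <- iota 0 k.+1]>>).
all: rewrite (eqP (free_of_nonconstant ncst')) size_map size_iota => dimk.
  by move: codim; rewrite leqn0 subn_eq0 leqNgt dimk.
by apply: IH st' _; rewrite subnS -subn1 leq_subLR add1n.
Qed.

Lemma exists_stratification h : generalized_affine h ->
  exists k f d, stratified h k f d /\ affine_or_constant h (level f d k).
Proof.
move=> ga; apply: (@exists_stratification_from h _ 0 (fun=> 0%R) (fun=> 0%R) ga _ (leqnn _)).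
by split=> [|i|]; [exists 0%R|rewrite ltn0|split=> i x; rewrite ltn0].
Qed.

End Stratification.

Section Converse.
Variables (R : realType) (E : vectType R).
Implicit Types (h : E -> \bar R) (f : nat -> 'Hom(E, R^o)) (d : nat -> R) (x y : E).
Local Open Scope ereal_scope.

Lemma halfspace_le h j f d m x : infinite_on_halfspaces h j f d -> (m < j)%N ->
  level f d m x -> h x != +oo -> (f m x <= d m)%R.
Proof. by case=> hP _ mj lx /eqP hx; rewrite leNgt; apply/negP => /(hP _ _ mj lx). Qed.

Lemma comb_level_or_minus h j f d x y l : infinite_on_halfspaces h j f d -> (0 < l < 1)%R ->
  h x != +oo -> h y != +oo -> forall m, (m <= j)%N ->
  (level f d m x /\ level f d m y) \/ h (l *: x + (1 - l) *: y)%R = -oo.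
Proof.
move=> halfs l01 hx hy; elim=> [_|m IH mj]; first by left.
case: (IH (ltnW mj)) => [[lx ly]|]; last by right.
have fx := halfspace_le halfs mj lx hx; have fy := halfspace_le halfs mj ly hy.
have [[ex ey]|] := pselect (f m x = d m /\ f m y = d m).
  by left; split; apply/levelS.
move=> /not_andP neq; right; have [_ hM] := halfs.
have [? ?] := andP l01; apply: (hM m _ mj).
  exact: affine_set_comb (@level_affine _ _ f d m) lx ly.
rewrite lfun_comb; case: neq => /eqP; rewrite neq_lt ltNge ?fx ?fy /= => ?; nra.
Qed.

Lemma affine_or_constant_comb_le h S x y s t l :
  affine_or_constant h S -> affine_set S -> S x -> S y -> (0 <= l <= 1)%R ->
  h x <= s%:E -> h y <= t%:E -> h (l *: x + (1 - l) *: y)%R <= (l * s + (1 - l) * t)%:E.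
Proof.
move=> aoc affS Sx Sy /andP[l0 l1] hx hy; have Sz := affine_set_comb l affS Sx Sy.
case: aoc => [[g [c hE]]|[c hE]]; move: hx hy; rewrite !hE //.
  by rewrite !lee_fin lfun_comb => ? ?; nra.
case: c {hE} => [r|//|_ _]; last exact: leNye.
by rewrite !lee_fin => ? ?; nra.
Qed.

Lemma stratified_ext_convex h j f d : infinite_on_halfspaces h j f d ->
  affine_or_constant h (level f d j) -> ext_convex h.
Proof.
move=> halfs aoc x y s t l /[dup] l01 /unit_interval_cases[->|->|l01'] hx hy.
- by rewrite scale0r add0r subr0 scale1r mul0r add0r mul1r.
- by rewrite subrr scale0r addr0 scale1r mul0r addr0 mul1r.
have fin z r : h z <= r%:E -> h z != +oo by move=> hz; apply/eqP => hzE; rewrite hzE in hz.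
case: (comb_level_or_minus halfs l01' (fin _ _ hx) (fin _ _ hy) (leqnn j)) => [[lx ly]|->].
  exact: affine_or_constant_comb_le aoc (@level_affine _ _ f d j) lx ly l01 hx hy.
exact: leNye.
Qed.

Lemma level_opp f d i : level (fun k => - f k)%R (fun k => - d k)%R i = level f d i.
Proof.
apply/funext => x; apply/propext.
split=> lx k ki; have := lx k ki; rewrite opp_lfunE; first exact: oppr_inj.
by move=> ->.
Qed.

Lemma generalized_affine_of_stratified h j f d : infinite_on_halfspaces h j f d ->
  affine_or_constant h (level f d j) -> generalized_affine h.
Proof.
move=> halfs aoc; split; first exact: stratified_ext_convex halfs aoc.
apply/ext_convex_opp; have [hP hM] := halfs.
apply: (@stratified_ext_convex _ j (fun k => - f k)%R (fun k => - d k)%R); rewrite ?level_opp.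
  by split=> i x ij; rewrite level_opp opp_lfunE ltrN2 => lx lt;
    [rewrite (hM i x)|rewrite (hP i x)].
case: aoc => [[g [c hE]]|[c hE]]; [left; exists (- g)%R, (- c)%R|right; exists (- c)] => x lx.
  by rewrite hE // opp_lfunE -EFinN opprD.
by rewrite hE.
Qed.

End Converse.

Lemma HsetE (R : realType) (E : vectType R) j (f : nat -> 'Hom(E, R^o)) (d : nat -> R) i :
  (i <= j)%N -> Hset (fun k : 'I_j => f k) (fun k => d k) i = level f d i.
Proof.
move=> ij; apply/funext => x; apply/propext.
by split=> lx k ki; [exact: (lx (Ordinal (leq_trans ki ij)))|exact: lx].
Qed.

Lemma exists_nat_extension (T : Type) j (eta : 'I_j -> T) (a : T) :
  exists f : nat -> T, eta = fun i : 'I_j => f i.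
Proof.
exists (fun n => if insub n is Some i then eta i else a).
by apply/funext => i; rewrite valK.
Qed.

Local Open Scope ereal_scope.

Theorem theorem5 (R : realType) (E : vectType R) (h : E -> \bar R) :
  generalized_affine h <->
  exists (j : nat) (eta : 'I_j -> 'Hom(E, R^o)) (delta : 'I_j -> R),
    [/\ free [seq eta i | i <- enum 'I_j],
        [/\ (forall i : nat, (i <= j)%N -> exists x, Hset eta delta i x),
            (forall i : 'I_j, exists x, Cplus eta delta i x) &
            (forall i : 'I_j, exists x, Cminus eta delta i x)],
        (forall (i : 'I_j) (x : E), Cplus eta delta i x -> h x = +oo),
        (forall (i : 'I_j) (x : E), Cminus eta delta i x -> h x = -oo) &
        ((exists (g : 'Hom(E, R^o)) (c : R),
            forall x, Hset eta delta j x -> h x = (g x + c)%:E) \/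
         (exists c : \bar R, forall x, Hset eta delta j x -> h x = c))].
Proof.
split=> [ga|[j [eta [delta [_ _ hP hM aoc]]]]].
- have [k [f [d [[[o lo] ncst [hP hM]] aoc]]]] := exists_stratification ga.
  exists k, (fun i : 'I_k => f i), (fun i : 'I_k => d i).
  have hit (i : 'I_k) r : exists x, level f d i x /\ f i x = r.
    exact: nonconstant_on_surj r (@level_affine _ _ f d i) (ncst i (ltn_ord i)).
  have ltW_ord (i : 'I_k) : (i <= k)%N by apply: ltnW.
  split; last by rewrite HsetE.
  + by rewrite (map_comp f val) val_enum_ord; apply: free_of_nonconstant ncst.
  + split=> [i ik|i|i]; first by exists o; rewrite HsetE //; apply: level_le lo.
      have [x [lx ex]] := hit i (d i + 1)%R.
      by exists x; split; rewrite ?HsetE // ex; lra.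
    have [x [lx ex]] := hit i (d i - 1)%R.
    by exists x; split; rewrite ?HsetE // ex; lra.
  + by move=> i x [lx lt]; apply: (hP i) => //; rewrite -(HsetE _ _ (ltW_ord i)).
  + by move=> i x [lx lt]; apply: (hM i) => //; rewrite -(HsetE _ _ (ltW_ord i)).
- have [f fE] := exists_nat_extension eta 0%R; have [d dE] := exists_nat_extension delta 0%R.
  subst eta delta; apply: (@generalized_affine_of_stratified _ _ h j f d); last first.
    by rewrite -(HsetE f d (leqnn j)).
  split=> i x ij lx lt; [apply: (hP (Ordinal ij))|apply: (hM (Ordinal ij))];
    by split; rewrite // HsetE // ltnW.
Qed.
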